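(* Let $n,N\ge1$ and $r$ be a positive integer with $r\le\lfloor(n-1)/2\rfloor$. Let $\Omega_2=\{y\in\mathbb{R}^{Nn}:\mathrm{rank}(\mathcal{L}(y))\le r\}$, where for $y=(y_1^\top,\dots,y_N^\top)^\top$ with $y_i\in\mathbb{R}^n$, $\mathcal{L}(y)=[\mathcal{H}_{r+1}(y_1)\ \mathcal{H}_{r+1}(y_2)\ \cdots\ \mathcal{H}_{r+1}(y_N)]\in\mathbb{R}^{(r+1)\times N(n-r)}$. Then $\Omega_2$ is prox-regular at every $\bar y\in\Omega_2$ with $\mathrm{rank}(\mathcal{L}(\bar y))=r$.
   Context: For $x\in\mathbb{R}^n$ and $1\le l\le n$, $\mathcal{H}_l(x)\in\mathbb{R}^{l\times(n-l+1)}$ is the Hankel matrix with $(i,j)$ entry $x(i+j-1)$. $N_\Omega(x)$ denotes the limiting normal cone. A closed set $\Omega$ is prox-regular at $\bar x\in\Omega$ for $\bar v\in N_\Omega(\bar x)$ if there exist $\epsilon>0$, $\sigma\ge0$ such that whenever $x\in\Omega$, $v\in N_\Omega(x)$, $\|x-\bar x\|<\epsilon$, $\|v-\bar v\|<\epsilon$, one has $\langle v,y-x\rangle\le\frac\sigma2\|y-x\|^2$ for all $y\in\Omega$ with $\|y-\bar x\|<\epsilon$; $\Omega$ is prox-regular at $\bar x$ if this holds for all $\bar v\in N_\Omega(\bar x)$. *)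

From HB Require Import structures.
From mathcomp Require Import all_boot all_order all_algebra.
From mathcomp Require Import reals.
Set Implicit Arguments. Unset Strict Implicit. Unset Printing Implicit Defensive.
Import Order.TTheory GRing.Theory Num.Theory.
Local Open Scope ring_scope.

Definition dotv (R : realType) (d : nat) (u v : 'rV[R]_d) : R :=
  \sum_(i < d) u 0 i * v 0 i.
Definition enorm (R : realType) (d : nat) (u : 'rV[R]_d) : R :=
  Num.sqrt (dotv u u).

Definition frechet_normal (R : realType) (d : nat) (Om : 'rV[R]_d -> Prop)
  (x v : 'rV[R]_d) : Prop :=
  Om x /\
  forall eps : R, 0 < eps -> exists2 delta : R, 0 < delta &
    forall x' : 'rV[R]_d, Om x' -> enorm (x' - x) < delta ->
      dotv v (x' - x) <= eps * enorm (x' - x).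

Definition limiting_normal (R : realType) (d : nat) (Om : 'rV[R]_d -> Prop)
  (x v : 'rV[R]_d) : Prop :=
  Om x /\
  exists (xs vs : nat -> 'rV[R]_d),
    (forall k, frechet_normal Om (xs k) (vs k)) /\
    (forall eps : R, 0 < eps -> exists K : nat, forall k, (K <= k)%N ->
        enorm (xs k - x) < eps /\ enorm (vs k - v) < eps).

Definition prox_regular_at_for (R : realType) (d : nat) (Om : 'rV[R]_d -> Prop)
  (xbar vbar : 'rV[R]_d) : Prop :=
  exists eps : R, exists sigma : R, 0 < eps /\ 0 <= sigma /\
    forall x v : 'rV[R]_d, Om x -> limiting_normal Om x v ->
      enorm (x - xbar) < eps -> enorm (v - vbar) < eps ->
      forall y : 'rV[R]_d, Om y -> enorm (y - xbar) < eps ->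
        dotv v (y - x) <= sigma / 2 * enorm (y - x) ^+ 2.

Definition prox_regular_at (R : realType) (d : nat) (Om : 'rV[R]_d -> Prop)
  (xbar : 'rV[R]_d) : Prop :=
  forall vbar, limiting_normal Om xbar vbar -> prox_regular_at_for Om xbar vbar.

(* x(k) with 0-based index k (0 outside range, never used out of range). *)
Definition vat (R : realType) (n : nat) (x : 'rV[R]_n) (k : nat) : R :=
  if insub k is Some k' then x 0 k' else 0.

(* Hankel matrix H_l(x) in R^{l x (n-l+1)}, (i,j) entry x(i+j-1) (1-based),
   i.e. x(i+j) 0-based. *)
Definition hankel (R : realType) (n : nat) (l : nat) (x : 'rV[R]_n)
  : 'M[R]_(l, n - l + 1) :=
  \matrix_(i < l, j < n - l + 1) vat x (i + j).

(* y in R^{N n} split into blocks y_1, ..., y_N of R^n (y = mxvec of the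
   N x n matrix whose i-th row is y_i). *)
Definition yblock (R : realType) (N n : nat) (y : 'rV[R]_(N * n)) (i : 'I_N)
  : 'rV[R]_n := row i (vec_mx y).

Definition Lmap (R : realType) (N n r : nat) (y : 'rV[R]_(N * n)) :=
  \mxrow_(i < N) hankel (r.+1) (yblock y i).

Definition Omega2 (R : realType) (N n r : nat) : 'rV[R]_(N * n) -> Prop :=
  fun y => (\rank (Lmap r y) <= r)%N.

Arguments hankel {R n} l x.
Arguments Lmap {R N n} r y.
Arguments Omega2 {R} N n r _.

From HB Require Import structures.
From mathcomp Require Import all_boot all_order all_algebra.
From mathcomp Require Import reals.
From mathcomp Require Import ring lra zify.
Import Order.TTheory GRing.Theory Num.Theory.
Local Open Scope ring_scope.
Set Implicit Arguments. Unset Strict Implicit. Unset Printing Implicit Defensive.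

(* Near ybar every y in Omega2 has rank L(y) = r exactly, so the left kernel
   of L(y) is a line, spanned by a vector c(y) normalized by c(y)_q = 1 for a
   fixed index q, and c is Lipschitz in y.  Given x, y in Omega2 and t in
   [0, 1], the vector c(x) + t (c(y) - c(x)) annihilates L(x + t (y - x)) up
   to the cross term t (1 - t) (c(y) - c(x)) L(y - x) = O(t |y - x|^2).  For
   c <> 0 the map e |-> c H_{r+1}(e) is a convolution, hence uniformly onto
   for c near c(ybar), so a correction t E with |E| = O(|y - x|^2) brings the
   point back into Omega2.  Testing a Frechet normal v at x along these points
   gives <v, y - x> <= K |v| |y - x|^2, which passes to limiting normals and
   is prox-regularity. *)

Section L1Norm.
Variable R : realType.

Definition l1norm p q (A : 'M[R]_(p, q)) : R := \sum_i \sum_j `|A i j|.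

Lemma l1norm_ge0 p q (A : 'M[R]_(p, q)) : 0 <= l1norm A.
Proof. by apply: sumr_ge0 => i _; apply: sumr_ge0. Qed.

Lemma l1normD p q (A B : 'M[R]_(p, q)) : l1norm (A + B) <= l1norm A + l1norm B.
Proof.
rewrite /l1norm -big_split /=; apply: ler_sum => i _.
by rewrite -big_split /=; apply: ler_sum => j _; rewrite mxE ler_normD.
Qed.

Lemma l1normN p q (A : 'M[R]_(p, q)) : l1norm (- A) = l1norm A.
Proof. by apply: eq_bigr => i _; apply: eq_bigr => j _; rewrite mxE normrN. Qed.

Lemma l1normBC p q (A B : 'M[R]_(p, q)) : l1norm (A - B) = l1norm (B - A).
Proof. by rewrite -l1normN opprB. Qed.

Lemma l1normB p q (A B : 'M[R]_(p, q)) : l1norm (A - B) <= l1norm A + l1norm B.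
Proof. by rewrite -(l1normN B) l1normD. Qed.

Lemma l1normZ p q a (A : 'M[R]_(p, q)) : l1norm (a *: A) = `|a| * l1norm A.
Proof.
rewrite /l1norm mulr_sumr; apply: eq_bigr => i _; rewrite mulr_sumr.
by apply: eq_bigr => j _; rewrite mxE normrM.
Qed.

Lemma l1norm0 p q : l1norm (0 : 'M[R]_(p, q)) = 0.
Proof. by rewrite -(scale0r 0) l1normZ normr0 mul0r. Qed.

Lemma l1norm_row p q (A : 'M[R]_(p, q)) i : \sum_j `|A i j| <= l1norm A.
Proof.
by rewrite /l1norm (bigD1 i) //= lerDl sumr_ge0 // => k _; apply: sumr_ge0.
Qed.

Lemma l1norm_entry p q (A : 'M[R]_(p, q)) i j : `|A i j| <= l1norm A.
Proof.
by apply: le_trans (l1norm_row A i); rewrite (bigD1 j) //= lerDl sumr_ge0.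
Qed.

Lemma l1norm_le0 p q (A : 'M[R]_(p, q)) : l1norm A <= 0 -> A = 0.
Proof.
move=> A0; apply/matrixP => i j; rewrite mxE; apply/eqP; rewrite -normr_le0.
exact: le_trans (l1norm_entry A i j) A0.
Qed.

Lemma l1norm_le p q (A : 'M[R]_(p, q)) b :
  (forall i j, `|A i j| <= b) -> l1norm A <= (p * q)%:R * b.
Proof.
move=> Ab; apply: (@le_trans _ _ (\sum_(i < p) \sum_(j < q) b)).
  by apply: ler_sum => i _; apply: ler_sum.
by rewrite !sumr_const !card_ord -mulrnA mulr_natl mulnC.
Qed.

Lemma l1norm_rV_le d (u : 'rV[R]_d) b : (forall j, `|u 0 j| <= b) -> l1norm u <= d%:R * b.
Proof.
by move=> ub; apply: le_trans (l1norm_le (b := b) _) _ => [i j|]; rewrite ?(ord1 i) ?mul1n.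
Qed.

Lemma l1normM p q s (A : 'M[R]_(p, q)) (B : 'M[R]_(q, s)) :
  l1norm (A *m B) <= l1norm A * l1norm B.
Proof.
rewrite /l1norm mulr_suml; apply: ler_sum => i _.
apply: (@le_trans _ _ (\sum_j \sum_k `|A i k| * `|B k j|)).
  apply: ler_sum => j _; rewrite mxE; apply: le_trans (ler_norm_sum _ _ _) _.
  by apply: ler_sum => k _; rewrite normrM.
rewrite exchange_big /= mulr_suml; apply: ler_sum => k _.
by rewrite -mulr_sumr ler_wpM2l // l1norm_row.
Qed.

Lemma l1norm_tr p q (A : 'M[R]_(p, q)) : l1norm A^T = l1norm A.
Proof.
by rewrite /l1norm exchange_big; apply: eq_bigr => i _; apply: eq_bigr => j _; rewrite mxE.
Qed.

Lemma l1norm1 p : l1norm (1%:M : 'M[R]_p) = p%:R.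
Proof.
rewrite /l1norm (eq_bigr (fun _ => 1)) ?sumr_const ?card_ord // => i _.
rewrite (bigD1 i) //= big1 ?mxE ?eqxx ?addr0 ?normr1 // => j /negPf ji.
by rewrite mxE eq_sym ji normr0.
Qed.

Lemma l1norm_row_mx p q s (A : 'M[R]_(p, q)) (B : 'M[R]_(p, s)) :
  l1norm (row_mx A B) = l1norm A + l1norm B.
Proof.
rewrite /l1norm -big_split; apply: eq_bigr => i _ /=.
by rewrite big_split_ord; congr (_ + _); apply: eq_bigr => j _; rewrite ?row_mxEl ?row_mxEr.
Qed.

Lemma dotv_mx d (u v : 'rV[R]_d) : dotv u v = (u *m v^T) 0 0.
Proof. by rewrite mxE; apply: eq_bigr => i _; rewrite mxE. Qed.

Lemma dotvDr d (u v w : 'rV[R]_d) : dotv u (v + w) = dotv u v + dotv u w.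
Proof. by rewrite !dotv_mx linearD mulmxDr mxE. Qed.

Lemma dotvZr d a (u v : 'rV[R]_d) : dotv u (a *: v) = a * dotv u v.
Proof. by rewrite !dotv_mx linearZ -scalemxAr mxE. Qed.

Lemma normr_dotv_le d (u v : 'rV[R]_d) : `|dotv u v| <= l1norm u * l1norm v.
Proof.
rewrite dotv_mx -(l1norm_tr v); apply: le_trans (l1norm_entry _ 0 0) _.
exact: l1normM.
Qed.

Lemma enorm_le_l1norm d (u : 'rV[R]_d) : enorm u <= l1norm u.
Proof.
rewrite /enorm -(ger0_norm (l1norm_ge0 u)) -sqrtr_sqr ler_sqrt ?sqr_ge0 //.
by rewrite expr2; apply: le_trans (ler_norm _) (normr_dotv_le _ _).
Qed.

Lemma l1norm_le_enorm d (u : 'rV[R]_d) : l1norm u <= d%:R * enorm u.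
Proof.
have entry_le i : `|u 0 i| <= enorm u.
  rewrite /enorm -sqrtr_sqr ler_sqrt; last by rewrite sumr_ge0 // => j _; rewrite -expr2 sqr_ge0.
  by rewrite /dotv (bigD1 i) //= expr2 lerDl sumr_ge0 // => j _; rewrite -expr2 sqr_ge0.
exact: l1norm_rV_le.
Qed.

Lemma l1norm_lt_of_enorm d (u : 'rV[R]_d) e :
  0 < e -> enorm u < e / (d%:R + 1) -> l1norm u < e.
Proof.
move=> e0 ue; have d0 : 0 <= d%:R :> R by [].
apply: le_lt_trans (l1norm_le_enorm u) _.
have : 0 <= enorm u := sqrtr_ge0 _; rewrite ltr_pdivlMr in ue; last by lra.
nra.
Qed.

Lemma dotv_shift d (v v' x x' y : 'rV[R]_d) :
  dotv v (y - x) <= dotv v' (y - x') + l1norm (v - v') * l1norm (y - x)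
                    + l1norm v' * l1norm (x' - x).
Proof.
have -> : dotv v (y - x) = dotv v' (y - x') + dotv (v - v') (y - x) + dotv v' (x' - x).
  by rewrite /dotv -!big_split; apply: eq_bigr => i _; rewrite !mxE /=; ring.
by rewrite -!addrA lerD2l lerD // (le_trans (ler_norm _) (normr_dotv_le _ _)).
Qed.

End L1Norm.

Lemma ler_add_small_mul (R : realType) (a b S : R) : 0 <= S ->
  (forall e, 0 < e -> e <= 1 -> a <= b + e * S) -> a <= b.
Proof.
move=> S0 small; apply/ler_addgt0Pr => e e0.
set e' := Num.min 1 (e / (S + 1)).
have e'0 : 0 < e' by rewrite lt_min ltr01 divr_gt0 //; lra.
have e'S : e' * (S + 1) <= e by rewrite -ler_pdivlMr ?ge_min ?lexx ?orbT //; lra.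
have e'1 : e' <= 1 by rewrite ge_min lexx.
apply: le_trans (small e' e'0 e'1) _; nra.
Qed.

Lemma mul_sqr_shift_le (R : realType) (V Y D E eta : R) :
  0 <= V -> 0 <= Y -> 0 <= D <= eta -> 0 <= E <= eta -> eta <= 1 ->
  (V + D) * (Y + E) ^+ 2 <= V * Y ^+ 2 + eta * (V * (2 * Y + 1) + (Y + 1) ^+ 2).
Proof.
move=> V0 Y0 /andP [D0 De] /andP [E0 Ee] eta1.
have DY : D * (Y + E) ^+ 2 <= eta * (Y + 1) ^+ 2.
  by rewrite ler_pM ?sqr_ge0 ?lerXn2r ?nnegrE //; lra.
have VE : V * (E * (2 * Y + E)) <= V * (eta * (2 * Y + 1)) by rewrite ler_wpM2l // ler_pM; lra.
rewrite !expr2 in DY *; nra.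
Qed.

Lemma limiting_normal_approx (R : realType) d (Om : 'rV[R]_d -> Prop) x v e :
  limiting_normal Om x v -> 0 < e ->
  exists x' v', [/\ frechet_normal Om x' v', l1norm (x' - x) < e & l1norm (v' - v) < e].
Proof.
move=> [_ [xs [vs [Fr xv_cvg]]]] e0; have d1 : 0 < d%:R + 1 :> R by rewrite ltr_wpDl.
have [k /(_ k (leqnn k)) [xk_x vk_v]] := xv_cvg _ (divr_gt0 e0 d1).
by exists (xs k), (vs k); split; rewrite // l1norm_lt_of_enorm.
Qed.

Section ProxRegularity.
Variables (R : realType) (d : nat) (Om : 'rV[R]_d -> Prop) (xb : 'rV[R]_d) (rho K : R).
Hypotheses (rho_gt0 : 0 < rho) (K_ge0 : 0 <= K).
Hypothesis frechet_bound : forall x y v,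
  l1norm (x - xb) <= rho -> l1norm (y - xb) <= rho -> Om y -> frechet_normal Om x v ->
  dotv v (y - x) <= K * l1norm v * l1norm (y - x) ^+ 2.

Lemma limiting_normal_bound x y v :
  l1norm (x - xb) < rho -> l1norm (y - xb) <= rho -> Om y -> limiting_normal Om x v ->
  dotv v (y - x) <= K * l1norm v * l1norm (y - x) ^+ 2.
Proof.
move=> hx hy Oy Nxv; set V := l1norm v; set Y := l1norm (y - x).
have V0 : 0 <= V := l1norm_ge0 _; have Y0 : 0 <= Y := l1norm_ge0 _.
set Q := V * (2 * Y + 1) + (Y + 1) ^+ 2.
have KQ0 : 0 <= K * Q by rewrite mulr_ge0 // addr_ge0 ?sqr_ge0 // mulr_ge0 //; lra.
apply: (@ler_add_small_mul _ _ _ (K * Q + Y + V + 1)); first by lra.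
move=> eta eta0 eta1; set gap := Num.min eta (rho - l1norm (x - xb)).
have gap0 : 0 < gap by rewrite lt_min eta0 subr_gt0.
have [gap_eta gap_rho] : gap <= eta /\ gap <= rho - l1norm (x - xb).
  by split; rewrite ge_min lexx ?orbT.
have [xk [vk [Fk]]] := limiting_normal_approx Nxv gap0.
set E := l1norm (xk - x); set D := l1norm (vk - v) => xk_x vk_v.
have D0 : 0 <= D := l1norm_ge0 _; have E0 : 0 <= E := l1norm_ge0 _.
have De : 0 <= D <= eta by rewrite D0 /=; lra.
have Ee : 0 <= E <= eta by rewrite E0 /=; lra.
have xk_ball : l1norm (xk - xb) <= rho.
  have -> : xk - xb = (xk - x) + (x - xb) by rewrite addrA subrK.
  by apply: le_trans (l1normD _ _) _; rewrite -/E; lra.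
have vk_le : l1norm vk <= V + D by rewrite -[vk](subrK v) addrC; apply: l1normD.
have yk_le : l1norm (y - xk) <= Y + E.
  have -> : y - xk = (y - x) - (xk - x) by rewrite opprB addrA subrK.
  by apply: l1normB.
have vk0 : 0 <= l1norm vk := l1norm_ge0 _.
have Fk_le : dotv vk (y - xk) <= K * (V * Y ^+ 2 + eta * Q).
  apply: le_trans (frechet_bound xk_ball hy Oy Fk) _; rewrite -mulrA ler_wpM2l //.
  apply: le_trans (mul_sqr_shift_le V0 Y0 De Ee eta1).
  by rewrite ler_pM ?sqr_ge0 ?l1norm_ge0 ?lerXn2r ?nnegrE ?l1norm_ge0 //; lra.
apply: le_trans (dotv_shift v vk x xk y) _; rewrite l1normBC -/D -/E -/Y.
have : D * Y <= eta * Y by rewrite ler_wpM2r //; lra.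
have : l1norm vk * E <= (V + 1) * eta by rewrite ler_pM //; lra.
nra.
Qed.

Lemma prox_regular_at_of_frechet_bound : prox_regular_at Om xb.
Proof.
move=> vb _; set eps := rho / (d%:R + 1).
have d1 : 0 < d%:R + 1 :> R by rewrite ltr_wpDl.
have eps0 : 0 < eps by rewrite divr_gt0.
have vb0 : 0 <= l1norm vb := l1norm_ge0 _.
exists eps, (2 * (K * (l1norm vb + rho) * d%:R ^+ 2)); do 2!split => //.
  by rewrite !mulr_ge0 ?sqr_ge0 ?addr_ge0 // ltW.
move=> x v _ Nxv /(l1norm_lt_of_enorm rho_gt0) hx /(l1norm_lt_of_enorm rho_gt0) hv y Oy
  /(l1norm_lt_of_enorm rho_gt0) hy.
apply: le_trans (limiting_normal_bound hx (ltW hy) Oy Nxv) _.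
have v_le : l1norm v <= l1norm vb + rho.
  by rewrite -[v](subrK vb) addrC; apply: le_trans (l1normD _ _) _; lra.
have yx0 : 0 <= l1norm (y - x) := l1norm_ge0 _.
have yx_le := l1norm_le_enorm (y - x).
apply: (@le_trans _ _ (K * (l1norm vb + rho) * (d%:R * enorm (y - x)) ^+ 2)).
  by rewrite ler_pM ?sqr_ge0 ?mulr_ge0 ?l1norm_ge0 ?ler_wpM2l // lerXn2r ?nnegrE //; lra.
by rewrite le_eqVlt exprMn; apply/orP; left; apply/eqP; field.
Qed.

End ProxRegularity.

Section Lmap.
Variables (R : realType) (N n r : nat).
Local Notation m := (n - r.+1 + 1)%N.

Lemma vat_linear a (u w : 'rV[R]_n) s : vat (a *: u + w) s = a * vat u s + vat w s.
Proof. by rewrite /vat; case: insubP => [k _ _|_]; rewrite ?mxE ?mulr0 ?addr0. Qed.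

Lemma yblock_linear a (u w : 'rV[R]_(N * n)) i :
  yblock (a *: u + w) i = a *: yblock u i + yblock w i.
Proof. by apply/rowP => j; rewrite !mxE. Qed.

Lemma Lmap_is_linear : linear (@Lmap R N n r).
Proof. by move=> a u w; apply/matrixP => i k; rewrite /Lmap !mxE yblock_linear vat_linear. Qed.

HB.instance Definition _ := GRing.isLinear.Build R _ _ _ (@Lmap R N n r) Lmap_is_linear.

Lemma l1norm_Lmap (y : 'rV[R]_(N * n)) :
  l1norm (Lmap r y) <= (r.+1 * \sum_(i < N) m)%:R * l1norm y.
Proof.
apply: l1norm_le => i k; rewrite !mxE /vat; case: insubP => [j _ _|_].
  by rewrite !mxE l1norm_entry.
by rewrite normr0 l1norm_ge0.
Qed.

Lemma l1norm_LmapB (x y : 'rV[R]_(N * n)) :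
  l1norm (Lmap r x - Lmap r y) <= (r.+1 * \sum_(i < N) m)%:R * l1norm (x - y).
Proof. by have := l1norm_Lmap (x - y); rewrite linearB. Qed.

Lemma mul_Lmap (c : 'rV[R]_r.+1) (y : 'rV[R]_(N * n)) :
  c *m Lmap r y = \mxrow_i (c *m hankel r.+1 (yblock y i)).
Proof. exact: mul_mxrow. Qed.

Lemma yblock_mxvec (M : 'M[R]_(N, n)) i : yblock (mxvec M) i = row i M.
Proof. by rewrite /yblock mxvecK. Qed.

End Lmap.

Section Perturbation.
Variable R : realType.

Lemma l1norm_le_mul_perturbed k l (A0 A : 'M[R]_(k, l)) (B0 : 'M[R]_(l, k)) :
  A0 *m B0 = 1%:M -> l1norm (A - A0) * l1norm B0 <= 2^-1 ->
  forall w : 'rV_k, l1norm w <= 2 * l1norm B0 * l1norm (w *m A).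
Proof.
move=> AB0 small w.
have w_eq : w = w *m A *m B0 - w *m (A - A0) *m B0.
  by rewrite -mulmxBl -mulmxBr opprB addrC subrK -mulmxA AB0 mulmx1.
have : l1norm w <= l1norm (w *m A) * l1norm B0 + l1norm w * 2^-1.
  rewrite {1}w_eq; apply: le_trans (l1normB _ _) _; rewrite lerD ?l1normM //.
  apply: le_trans (l1normM _ _) _; apply: le_trans (ler_wpM2r (l1norm_ge0 _) (l1normM _ _)) _.
  by rewrite -mulrA ler_wpM2l ?l1norm_ge0.
lra.
Qed.

Lemma perturbed_solvable n m (T0 T : 'M[R]_(n, m)) (B0 : 'M[R]_(m, n)) :
  B0 *m T0 = 1%:M -> l1norm B0 * l1norm (T - T0) * m%:R <= 2^-1 ->
  forall g : 'rV_m, exists2 e : 'rV_n, e *m T = g & l1norm e <= 2 * m%:R * l1norm B0 * l1norm g.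
Proof.
move=> BT0 small g; set F := B0 *m T.
have F_bound : forall w : 'rV_m, l1norm w <= 2 * m%:R * l1norm (w *m F).
  rewrite -(l1norm1 R m); apply: (l1norm_le_mul_perturbed (mulmx1 1%:M)).
  rewrite l1norm1 /F -BT0 -mulmxBr; apply: le_trans small.
  by rewrite ler_wpM2r ?l1normM.
have F_unit : F \in unitmx.
  rewrite -row_free_unit; apply: inj_row_free => w wF0; apply: l1norm_le0.
  by apply: le_trans (F_bound w) _; rewrite wF0 l1norm0 mulr0.
exists (g *m invmx F *m B0); first by rewrite -mulmxA -/F -mulmxA mulVmx ?mulmx1.
apply: le_trans (l1normM _ _) _.
have := F_bound (g *m invmx F); rewrite -mulmxA mulVmx // mulmx1.
have := l1norm_ge0 B0; have := l1norm_ge0 (g *m invmx F); nra.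
Qed.

End Perturbation.

Section Convolution.
Variables (R : realType) (n r : nat).
Local Notation m := (n - r.+1 + 1)%N.

Definition conv_mx (c : 'rV[R]_r.+1) : 'M[R]_(n, m) :=
  \matrix_(a < n, j < m) \sum_(k < r.+1) c 0 k * ((a : nat) == (k + j)%N)%:R.

Lemma vat_sum (e : 'rV[R]_n) s : vat e s = \sum_(a < n) e 0 a * ((a : nat) == s)%:R.
Proof.
rewrite /vat; case: insubP => [k _ <-|s_out].
  rewrite (bigD1 k) //= eqxx mulr1 big1 ?addr0 // => a /negPf ak.
  by rewrite val_eqE ak mulr0.
rewrite big1 // => a _; case: eqP => [as_|]; last by rewrite mulr0.
by rewrite -as_ ltn_ord in s_out.
Qed.

Lemma mul_conv_mx (c : 'rV[R]_r.+1) (e : 'rV[R]_n) : e *m conv_mx c = c *m hankel r.+1 e.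
Proof.
apply/rowP => j; rewrite !mxE.
under eq_bigr => a _ do rewrite !mxE mulr_sumr.
rewrite exchange_big /=; apply: eq_bigr => k _.
by rewrite mxE vat_sum mulr_sumr; apply: eq_bigr => a _; rewrite mulrCA mulrA.
Qed.

Lemma conv_mxB (c c' : 'rV[R]_r.+1) : conv_mx c - conv_mx c' = conv_mx (c - c').
Proof.
apply/matrixP => a j; rewrite !mxE -sumrB; apply: eq_bigr => k _.
by rewrite !mxE mulrBl.
Qed.

Lemma l1norm_conv_mx (c : 'rV[R]_r.+1) : l1norm (conv_mx c) <= (n * m)%:R * l1norm c.
Proof.
apply: l1norm_le => a j; rewrite mxE; apply: le_trans (ler_norm_sum _ _ _) _.
apply: le_trans (l1norm_row c 0); apply: ler_sum => k _.
by rewrite normrM ler_piMr // ger0_norm ?ler0n // lern1 leq_b1.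
Qed.

Lemma coef_sumX K (f : 'I_K -> R) (i : 'I_K) : (\sum_(j < K) f j *: 'X^j)`_i = f i.
Proof.
rewrite coef_sum (bigD1 i) //= coefZ coefXn eqxx mulr1 big1 ?addr0 // => j /negPf ji.
by rewrite coefZ coefXn val_eqE eq_sym ji mulr0.
Qed.

Lemma conv_mx_row_full (c : 'rV[R]_r.+1) : (r.+1 <= n)%N -> c != 0 -> row_full (conv_mx c).
Proof.
move=> rn c_nz; rewrite /row_full -mxrank_tr; apply: inj_row_free => v vT0.
(* [v *m (conv_mx c)^T = 0] says that the polynomial product P * Q below vanishes. *)
pose P : {poly R} := \sum_(j < m) v 0 j *: 'X^j.
pose Q : {poly R} := \sum_(k < r.+1) c 0 k *: 'X^k.
have PQ0 : P * Q = 0.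
  have -> : P * Q = \sum_(j < m) \sum_(k < r.+1) (v 0 j * c 0 k) *: 'X^(k + j).
    rewrite mulr_suml; apply: eq_bigr => j _; rewrite mulr_sumr; apply: eq_bigr => k _.
    by rewrite -scalerAl -scalerAr scalerA (addnC k) exprD.
  apply/polyP => s; rewrite coef0 coef_sum; have [sn|ns] := ltnP s n.
    apply: (@eq_trans _ _ ((v *m (conv_mx c)^T) 0 (Ordinal sn))); last by rewrite vT0 mxE.
    rewrite mxE; apply: eq_bigr => j _; rewrite !mxE mulr_sumr coef_sum; apply: eq_bigr => k _.
    by rewrite coefZ coefXn eq_sym mulrA.
  rewrite big1 // => j _; rewrite coef_sum big1 // => k _; rewrite coefZ coefXn.
  have : (k + j < s)%N by have := ltn_ord j; have := ltn_ord k; lia.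
  by rewrite ltn_neqAle eq_sym => /andP [/negPf ->]; rewrite mulr0.
move/eqP: PQ0; rewrite mulf_eq0 => /orP [/eqP P0|/eqP Q0].
  by apply/rowP => j; rewrite mxE -(coef_sumX (fun j => v 0 j)) -/P P0 coef0.
by case/eqP: c_nz; apply/rowP => k; rewrite mxE -(coef_sumX (fun k => c 0 k)) -/Q Q0 coef0.
Qed.

Lemma hankel_solvable_near (cb : 'rV[R]_r.+1) : (r.+1 <= n)%N -> cb != 0 ->
  exists kap rho : R, [/\ 0 <= kap, 0 < rho &
    forall c, l1norm (c - cb) <= rho -> forall g : 'rV_m,
      exists2 e : 'rV_n, c *m hankel r.+1 e = g & l1norm e <= kap * l1norm g].
Proof.
move=> rn cb_nz; have /row_fullP [B0 BT0] := conv_mx_row_full rn cb_nz.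
set C := l1norm B0 * (n * m)%:R * m%:R.
have B00 : 0 <= l1norm B0 := l1norm_ge0 _.
have C0 : 0 <= C by rewrite !mulr_ge0.
exists (2 * m%:R * l1norm B0), (2 * (C + 1))^-1; split; first by rewrite !mulr_ge0.
  by rewrite invr_gt0; lra.
move=> c c_near g.
have small : l1norm B0 * l1norm (conv_mx c - conv_mx cb) * m%:R <= 2^-1.
  have := l1norm_conv_mx (c - cb); rewrite -conv_mxB => conv_le.
  have : C * l1norm (c - cb) <= C * (2 * (C + 1))^-1 by rewrite ler_wpM2l.
  have : C * (2 * (C + 1))^-1 <= 2^-1 by rewrite ler_pdivrMr; lra.
  have := ler_wpM2l (mulr_ge0 B00 (ler0n R m)) conv_le.
  rewrite /C; lra.
have [e eT e_le] := perturbed_solvable BT0 small g.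
by exists e; rewrite // -mul_conv_mx.
Qed.

End Convolution.

Section NormalizedKernel.
Variables (R : realType) (k l : nat).

Lemma rank_le_kernelP (A : 'M[R]_(k.+1, l)) :
  (\rank A <= k)%N <-> exists2 c : 'rV_k.+1, c != 0 & c *m A = 0.
Proof.
have -> : (\rank A <= k)%N = ~~ row_free A.
  by rewrite /row_free eqn_leq rank_leq_row /= leqNgt.
split; first by rewrite -kermx_eq0 => /rowV0Pn [c /sub_kermxP cA c_nz]; exists c.
by case=> c c_nz cA; apply/negP => A_free; move: c_nz; rewrite -(mulmx_free_eq0 _ A_free) cA eqxx.
Qed.

(* Appending the column e_q turns the normalization c_q = 1 of a kernel vector
   into the linear equation c *m augmx q X = row_mx 0 1, which stays uniquely
   and stably solvable for X near a matrix of rank k. *)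
Definition augmx (q : 'I_k.+1) (X : 'M[R]_(k.+1, l)) : 'M[R]_(k.+1, l + 1) :=
  row_mx X (delta_mx q 0).

Lemma mul_augmx (c : 'rV[R]_k.+1) q X : c *m augmx q X = row_mx (c *m X) (c 0 q)%:M.
Proof.
rewrite mul_mx_row; congr row_mx; apply/matrixP => i j.
rewrite (ord1 i) (ord1 j) !mxE (bigD1 q) //= !mxE !eqxx mulr1 big1 ?addr0 // => a /negPf aq.
by rewrite mxE aq mulr0.
Qed.

Lemma augmxB q (X Y : 'M[R]_(k.+1, l)) : augmx q Y - augmx q X = row_mx (Y - X) 0.
Proof. by rewrite /augmx opp_row_mx add_row_mx subrr. Qed.

Lemma augmx_row_free (X : 'M[R]_(k.+1, l)) : \rank X = k -> exists q, row_free (augmx q X).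
Proof.
move=> rkX; have ker1 : \rank (kermx X) = 1%N by rewrite mxrank_ker rkX subSnn.
have /rowV0Pn [c cK c_nz] : kermx X != 0 by rewrite -mxrank_eq0 ker1.
have [q cq] := rV0Pn _ c_nz.
exists q; apply: inj_row_free => w /eqP; rewrite mul_augmx -row_mx0 => /eqP /eq_row_mx [wX wq].
have wK : (w <= kermx X)%MS by apply/sub_kermxP.
have Kc : (kermx X <= c)%MS by rewrite -(mxrank_leqif_sup cK).2 ker1 rank_rV c_nz.
have [a wa] := sub_rVP (submx_trans wK Kc).
move/matrixP/(_ 0 0): wq; rewrite wa !mxE eqxx mulr1n => /eqP.
by rewrite mulf_eq0 (negPf cq) orbF => /eqP ->; rewrite scale0r.
Qed.

Section NearRowFree.
Variables (q : 'I_k.+1) (X0 : 'M[R]_(k.+1, l)) (B : 'M[R]_(l + 1, k.+1)).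
Hypothesis augX0B : augmx q X0 *m B = 1%:M.

Lemma l1norm_le_mul_augmx X : l1norm (X - X0) * l1norm B <= 2^-1 ->
  forall w : 'rV_k.+1, l1norm w <= 2 * l1norm B * l1norm (w *m augmx q X).
Proof.
move=> X_near; apply: (l1norm_le_mul_perturbed augX0B).
by rewrite augmxB l1norm_row_mx l1norm0 addr0.
Qed.

Lemma normalized_kernel_exists X : (\rank X <= k)%N -> l1norm (X - X0) * l1norm B <= 2^-1 ->
  exists2 c : 'rV_k.+1, c *m X = 0 & c 0 q = 1.
Proof.
move=> /rank_le_kernelP [u u_nz uX] X_near.
have uq : u 0 q != 0.
  apply: contraNneq u_nz => uq0; apply/eqP/l1norm_le0.
  apply: le_trans (l1norm_le_mul_augmx X_near u) _.
  by rewrite mul_augmx uX uq0 raddf0 row_mx0 l1norm0 mulr0.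
by exists ((u 0 q)^-1 *: u); rewrite ?mxE ?mulVf // -scalemxAl uX scaler0.
Qed.

Lemma normalized_kernel_lipschitz X Y (cX cY : 'rV_k.+1) :
  l1norm (X - X0) * l1norm B <= 2^-1 -> l1norm (Y - X0) * l1norm B <= 2^-1 ->
  cX *m X = 0 -> cX 0 q = 1 -> cY *m Y = 0 -> cY 0 q = 1 ->
  l1norm (cX - cY) <= (2 * l1norm B) ^+ 2 * l1norm (X - Y).
Proof.
move=> X_near Y_near cXX cXq cYY cYq.
have B0 : 0 <= l1norm B := l1norm_ge0 _.
have cY_le : l1norm cY <= 2 * l1norm B.
  apply: le_trans (l1norm_le_mul_augmx Y_near cY) _.
  by rewrite mul_augmx cYY cYq l1norm_row_mx l1norm0 l1norm1 add0r mulr1.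
apply: le_trans (l1norm_le_mul_augmx X_near _) _.
have -> : (cX - cY) *m augmx q X = cY *m (augmx q Y - augmx q X).
  by rewrite mulmxBl mulmxBr !mul_augmx cXX cXq cYY cYq.
rewrite augmxB expr2 -[X in _ <= X]mulrA ler_wpM2l ?mulr_ge0 //.
apply: le_trans (l1normM _ _) _; rewrite l1norm_row_mx l1norm0 addr0 l1normBC.
by rewrite ler_wpM2r ?l1norm_ge0.
Qed.

End NearRowFree.

Lemma normalized_kernel_near (X0 : 'M[R]_(k.+1, l)) : \rank X0 = k ->
  exists q (rho C : R), [/\ 0 < rho, 0 <= C,
    forall X, (\rank X <= k)%N -> l1norm (X - X0) <= rho ->
      exists2 c : 'rV_k.+1, c *m X = 0 & c 0 q = 1 &
    forall X Y (cX cY : 'rV_k.+1), l1norm (X - X0) <= rho -> l1norm (Y - X0) <= rho ->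
      cX *m X = 0 -> cX 0 q = 1 -> cY *m Y = 0 -> cY 0 q = 1 ->
      l1norm (cX - cY) <= C * l1norm (X - Y)].
Proof.
move=> /augmx_row_free [q /row_freeP [B augX0B]].
have B0 : 0 <= l1norm B := l1norm_ge0 _.
have near X : l1norm (X - X0) <= (2 * (l1norm B + 1))^-1 -> l1norm (X - X0) * l1norm B <= 2^-1.
  move=> X_le; rewrite mulrC; apply: le_trans (ler_wpM2l B0 X_le) _.
  by rewrite ler_pdivrMr; lra.
exists q, (2 * (l1norm B + 1))^-1, ((2 * l1norm B) ^+ 2); split.
- by rewrite invr_gt0; lra.
- exact: sqr_ge0.
- by move=> X rkX /near; apply: (normalized_kernel_exists augX0B).
- by move=> X Y cX cY /near X_near /near Y_near; apply: (normalized_kernel_lipschitz augX0B).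
Qed.

End NormalizedKernel.

(* Z is chosen to cancel the cross term of the bilinear expansion. *)
Lemma mulmx_segment_eq0 (R : realType) k l (cx cy : 'rV[R]_k) (X Y Z : 'M[R]_(k, l)) t :
  cx *m X = 0 -> cy *m Y = 0 ->
  (cx + t *: (cy - cx)) *m Z = (1 - t) *: ((cy - cx) *m (Y - X)) ->
  (cx + t *: (cy - cx)) *m (X + t *: (Y - X) + t *: Z) = 0.
Proof.
move=> cxX cyY cZ; rewrite mulmxDr -scalemxAr cZ !mulmxDr -!scalemxAr !mulmxBr !mulmxDl.
rewrite -!scalemxAl !mulmxBl ?mulmxN ?mulNmx ?opprK cxX cyY; move: (cx *m Y) (cy *m X) => a b.
by apply/rowP => j; rewrite !mxE; ring.
Qed.

Section Omega2FrechetBound.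
Variables (R : realType) (N n r : nat) (yb : 'rV[R]_(N * n)).
Local Notation m := (n - r.+1 + 1)%N.
Local Notation M := (\sum_(i < N) m)%N.
Local Notation Om := (Omega2 N n r).
Local Notation CL := ((r.+1 * M)%:R : R).

Variables (q : 'I_r.+1) (rhoK CK : R).
Hypothesis CK_ge0 : 0 <= CK.
Hypothesis kernel_exists : forall X : 'M[R]_(r.+1, M),
  (\rank X <= r)%N -> l1norm (X - Lmap r yb) <= rhoK ->
  exists2 c : 'rV_r.+1, c *m X = 0 & c 0 q = 1.
Hypothesis kernel_lipschitz : forall (X Y : 'M[R]_(r.+1, M)) (cX cY : 'rV_r.+1),
  l1norm (X - Lmap r yb) <= rhoK -> l1norm (Y - Lmap r yb) <= rhoK ->
  cX *m X = 0 -> cX 0 q = 1 -> cY *m Y = 0 -> cY 0 q = 1 ->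
  l1norm (cX - cY) <= CK * l1norm (X - Y).

Variables (cb : 'rV[R]_r.+1) (kT rT : R).
Hypotheses (cbL : cb *m Lmap r yb = 0) (cbq : cb 0 q = 1) (kT_ge0 : 0 <= kT).
Hypothesis hankel_solvable : forall c, l1norm (c - cb) <= rT -> forall g : 'rV_m,
  exists2 e : 'rV_n, c *m hankel r.+1 e = g & l1norm e <= kT * l1norm g.

Variable rho : R.
Hypotheses (rho_gt0 : 0 < rho) (rho_small : CL * (CK + 1) * rho <= Num.min rhoK rT).

Let Ke : R := (N * n)%:R * (kT * (m%:R * (CK * CL ^+ 2))).

Lemma Ke_ge0 : 0 <= Ke.
Proof. by rewrite /Ke !mulr_ge0 ?sqr_ge0. Qed.

Lemma rho_le_radii : CL * rho <= rhoK /\ CK * (CL * rho) <= rT.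
Proof.
have CLr0 : 0 <= CL * rho by rewrite mulr_ge0 // ltW.
have CKLr0 : 0 <= CK * (CL * rho) by rewrite mulr_ge0.
by have := rho_small; rewrite le_min => /andP [h1 h2]; split; lra.
Qed.

Lemma Lmap_near x : l1norm (x - yb) <= rho -> l1norm (Lmap r x - Lmap r yb) <= rhoK.
Proof.
move=> hx; apply: le_trans (l1norm_LmapB r _ _) _.
by apply: (le_trans _ (proj1 rho_le_radii)); rewrite ler_wpM2l.
Qed.

Lemma kernel_near_cb x c : l1norm (x - yb) <= rho ->
  c *m Lmap r x = 0 -> c 0 q = 1 -> l1norm (c - cb) <= rT.
Proof.
move=> hx cL cq; have yb_near : l1norm (yb - yb) <= rho by rewrite subrr l1norm0 ltW.
apply: le_trans (kernel_lipschitz (Lmap_near hx) (Lmap_near yb_near) cL cq cbL cbq) _.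
apply: (le_trans _ (proj2 rho_le_radii)); rewrite ler_wpM2l //.
by apply: le_trans (l1norm_LmapB r _ _) _; rewrite ler_wpM2l.
Qed.

Lemma l1norm_submxrow (G : 'rV[R]_M) i : l1norm (submxrow G i) <= m%:R * l1norm G.
Proof. by apply: l1norm_rV_le => j; rewrite mxE l1norm_entry. Qed.

Lemma Lmap_solvable_near c (G : 'rV[R]_M) : l1norm (c - cb) <= rT ->
  exists2 E : 'rV_(N * n), c *m Lmap r E = G &
    l1norm E <= (N * n)%:R * (kT * (m%:R * l1norm G)).
Proof.
move=> c_near.
have [e eG e_le] := fin_all_exists2 (fun i => hankel_solvable c_near (submxrow G i)).
pose E : 'rV_(N * n) := mxvec (\matrix_(i, j) e i 0 j).
have yE i : yblock E i = e i by rewrite yblock_mxvec; apply/rowP => j; rewrite !mxE.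
exists E; first by apply/mxrowP => i; rewrite mul_Lmap mxrowK yE eG.
apply: l1norm_rV_le => k.
case/mxvec_indexP: k => i j; rewrite mxvecE mxE; apply: le_trans (l1norm_entry _ 0 j) _.
by apply: le_trans (e_le i) _; rewrite ler_wpM2l // l1norm_submxrow.
Qed.

Lemma Omega2_correction x y t :
  Om x -> Om y -> l1norm (x - yb) <= rho -> l1norm (y - yb) <= rho -> 0 <= t <= 1 ->
  exists2 E, Om (x + t *: (y - x) + t *: E) & l1norm E <= Ke * l1norm (y - x) ^+ 2.
Proof.
move=> Ox Oy hx hy /andP [t0 t1].
have [cx cxL cxq] := kernel_exists Ox (Lmap_near hx).
have [cy cyL cyq] := kernel_exists Oy (Lmap_near hy).
set c := cx + t *: (cy - cx).
have c_near : l1norm (c - cb) <= rT.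
  have -> : c - cb = (1 - t) *: (cx - cb) + t *: (cy - cb).
    by apply/rowP => j; rewrite !mxE; ring.
  apply: le_trans (l1normD _ _) _; rewrite !l1normZ !ger0_norm ?subr_ge0 //.
  have := kernel_near_cb hx cxL cxq; have := kernel_near_cb hy cyL cyq; nra.
have [E EL E_le] := Lmap_solvable_near ((1 - t) *: ((cy - cx) *m Lmap r (y - x))) c_near.
exists E.
  apply/rank_le_kernelP; exists c.
    apply/eqP => /matrixP/(_ 0 q)/eqP.
    by rewrite !mxE cxq cyq subrr mulr0 addr0 oner_eq0.
  have -> : Lmap r (x + t *: (y - x) + t *: E)
            = Lmap r x + t *: (Lmap r y - Lmap r x) + t *: Lmap r E.
    by rewrite !linearD !linearZ linearN.
  by apply: mulmx_segment_eq0 cxL cyL _; rewrite EL linearB.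
apply: le_trans E_le _; set Y := l1norm (y - x).
have G_le : l1norm ((1 - t) *: ((cy - cx) *m Lmap r (y - x))) <= CK * CL ^+ 2 * Y ^+ 2.
  have prod_le : l1norm ((cy - cx) *m Lmap r (y - x)) <= CK * CL ^+ 2 * Y ^+ 2.
    have cyx : l1norm (cy - cx) <= CK * (CL * Y).
      apply: le_trans (kernel_lipschitz (Lmap_near hy) (Lmap_near hx) cyL cyq cxL cxq) _.
      by rewrite ler_wpM2l //; apply: l1norm_LmapB.
    apply: le_trans (l1normM _ _) _.
    apply: le_trans (ler_pM (l1norm_ge0 _) (l1norm_ge0 _) cyx (l1norm_Lmap r (y - x))) _.
    by rewrite [X in _ <= X](_ : _ = CK * (CL * Y) * (CL * Y)) //; ring.
  rewrite l1normZ ger0_norm ?subr_ge0 //; apply: le_trans prod_le.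
  by rewrite ler_piMl ?l1norm_ge0 //; lra.
by rewrite /Ke -!mulrA !ler_wpM2l //; lra.
Qed.

Lemma Omega2_frechet_bound x y v : l1norm (x - yb) <= rho -> l1norm (y - yb) <= rho ->
  Om y -> frechet_normal Om x v -> dotv v (y - x) <= Ke * l1norm v * l1norm (y - x) ^+ 2.
Proof.
move=> hx hy Oy [Ox v_normal]; set Y := l1norm (y - x); set S := Y + Ke * Y ^+ 2.
have Y0 : 0 <= Y := l1norm_ge0 _.
have S0 : 0 <= S by rewrite addr_ge0 ?mulr_ge0 ?Ke_ge0 ?sqr_ge0.
apply: (ler_add_small_mul S0) => eps eps0 _.
have [del del0 close] := v_normal eps eps0.
set t := del / (S + del).
have t0 : 0 < t by rewrite divr_gt0 //; lra.
have t1 : t <= 1 by rewrite ler_pdivrMr; lra.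
have tS : t * S < del by rewrite mulrAC ltr_pdivrMr; nra.
have t01 : 0 <= t <= 1 by rewrite ltW.
have [E OE E_le] := Omega2_correction Ox Oy hx hy t01.
have zx : x + t *: (y - x) + t *: E - x = t *: (y - x + E).
  by apply/rowP => j; rewrite !mxE; ring.
have zx_le : l1norm (t *: (y - x + E)) <= t * S.
  rewrite l1normZ gtr0_norm // ler_wpM2l ?(ltW t0) //.
  by apply: le_trans (l1normD _ _) _; rewrite /S lerD2l.
have z_close : enorm (x + t *: (y - x) + t *: E - x) < del.
  by rewrite zx (le_lt_trans (enorm_le_l1norm _) (le_lt_trans zx_le tS)).
have Fz := close _ OE z_close; rewrite zx dotvZr dotvDr in Fz.
have z_le := le_trans (enorm_le_l1norm _) zx_le.
have := normr_dotv_le v E; rewrite ler_norml => /andP [vE _].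
have vE_le : l1norm v * l1norm E <= l1norm v * (Ke * Y ^+ 2) by rewrite ler_wpM2l ?l1norm_ge0.
have : t * (dotv v (y - x) + dotv v E) <= t * (eps * S).
  by apply: le_trans Fz _; rewrite mulrCA ler_wpM2l // ltW.
by rewrite ler_pM2l //; lra.
Qed.

End Omega2FrechetBound.

Lemma Omega2_frechet_bound_near (R : realType) (N n r : nat) (yb : 'rV[R]_(N * n)) :
  (r.+1 <= n)%N -> \rank (Lmap r yb) = r ->
  exists rho K : R, [/\ 0 < rho, 0 <= K &
    forall x y v, l1norm (x - yb) <= rho -> l1norm (y - yb) <= rho ->
      Omega2 N n r y -> frechet_normal (Omega2 N n r) x v ->
      dotv v (y - x) <= K * l1norm v * l1norm (y - x) ^+ 2].
Proof.
move=> rn rk.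
have [q [rhoK [CK [rhoK0 CK0 kernel_exists kernel_lipschitz]]]] := normalized_kernel_near rk.
have [cb cbL cbq] : exists2 cb : 'rV_r.+1, cb *m Lmap r yb = 0 & cb 0 q = 1.
  by apply: kernel_exists; rewrite ?rk // subrr l1norm0 ltW.
have cb_nz : cb != 0.
  by apply/eqP => cb0; move: cbq; rewrite cb0 mxE => /eqP; rewrite eq_sym oner_eq0.
have [kT [rT [kT0 rT0 hankel_solvable]]] := hankel_solvable_near rn cb_nz.
set C : R := (r.+1 * \sum_(i < N) (n - r.+1 + 1))%:R * (CK + 1).
have C0 : 0 <= C by rewrite mulr_ge0 //; lra.
have min0 : 0 < Num.min rhoK rT by rewrite lt_min rhoK0.
set rho := Num.min rhoK rT / (C + 1).
have rho0 : 0 < rho by rewrite divr_gt0 //; lra.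
have rho_small : C * rho <= Num.min rhoK rT.
  by rewrite mulrCA ler_piMr ?(ltW min0) // ler_pdivrMr ?mul1r; lra.
exists rho; eexists; split; last first.
- exact: (Omega2_frechet_bound CK0 kernel_exists kernel_lipschitz cbL cbq kT0
            hankel_solvable rho0 rho_small).
- exact: Ke_ge0.
- exact: rho0.
Qed.

Unset Implicit Arguments.

Theorem theorem3p3 (R : realType) (n N r : nat) :
  (1 <= n)%N -> (1 <= N)%N -> (0 < r)%N -> (r <= (n - 1)./2)%N ->
  forall ybar : 'rV[R]_(N * n),
    Omega2 N n r ybar -> \rank (Lmap r ybar) = r ->
    prox_regular_at (Omega2 N n r) ybar.
Proof.
move=> n_pos _ _ r_le yb _ rk.
have rn : (r.+1 <= n)%N.
  have : ((n - 1)./2 <= n - 1)%N by rewrite leq_half_double; lia.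
  lia.
have [rho [K [rho0 K0 bound]]] := Omega2_frechet_bound_near rn rk.
exact: prox_regular_at_of_frechet_bound rho0 K0 bound.
Qed.
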